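(* Let $\mathsf M=\mathsf F(E)$ be a free PROP and $\mathcal E$ any PROP. The graded vector space $\mathrm{Der}(\mathsf M,\mathsf M*\mathcal E)$ is a graded pre-Lie algebra with product $\theta\diamond\phi:=(-1)^{|\theta||\phi|}\mathrm{Ex}(\tilde\phi\circ\theta|_E)$; that is, the associator $(\theta\diamond\phi)\diamond\psi-\theta\diamond(\phi\diamond\psi)$ is graded symmetric in $\phi$ and $\psi$ for all $\theta,\phi,\psi$.
   Context: Graded vector spaces over a field of characteristic zero, Koszul signs. $\mathsf F(E)$ is the free PROP on a $\Sigma$-bimodule $E$; $\mathsf M*\mathcal E$ is the coproduct of PROPs, an $\mathsf M$-module via the inclusion $\mathsf M\hookrightarrow\mathsf M*\mathcal E$. $\mathrm{Der}(\mathsf P,U)$ is the graded space of derivations (maps of $\Sigma$-bimodules that are Koszul-signed derivations for both horizontal and vertical compositions). Restriction to generators gives an isomorphism $\mathrm{Der}(\mathsf M,\mathsf M*\mathcal E)\cong\mathrm{Lin}_{\Sigma\text{-}\Sigma}(E,\mathsf M*\mathcal E)$; for $u\in\mathrm{Lin}_{\Sigma\text{-}\Sigma}(E,\mathsf M*\mathcal E)$, $\mathrm{Ex}(u)$ denotes the unique derivation with $\mathrm{Ex}(u)|_E=u$. Every $\phi\in\mathrm{Der}(\mathsf M,\mathsf M*\mathcal E)$ extends uniquely to $\tilde\phi\in\mathrm{Der}(\mathsf M*\mathcal E)$ with $\tilde\phi|_{\mathcal E}=0$. A graded pre-Lie algebra is a graded space with a bilinear product whose associator is graded symmetric in the last two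 variables. *)

(* Graded PROPs over a field K, as in the paper:
   a PROP is a graded Sigma-bimodule {P(m,n)} (m outputs, n inputs) with
   vertical composition  P(m,n) x P(n,k) -> P(m,k),
   horizontal composition P(m1,n1) x P(m2,n2) -> P(m1+m2,n1+n2),
   units 1_n in P(n,n), subject to the usual axioms with Koszul signs. *)
From HB Require Import structures.
From mathcomp Require Import all_boot all_order all_fingroup all_algebra.
Set Implicit Arguments. Unset Strict Implicit. Unset Printing Implicit Defensive.
Import GRing.Theory.
Local Open Scope ring_scope.

Definition ksgn {K : fieldType} (a b : int) : K := (-1) ^+ absz (a * b)%R.

Definition castP (T : nat -> nat -> Type) (m n m' n' : nat)
  (em : m = m') (en : n = n') (x : T m n) : T m' n' :=
  eq_rect n (fun n0 => T m' n0) (eq_rect m (fun m0 => T m0 n) x m' em) n' en.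
Arguments castP T {m n m' n'} em en x.

Definition pprod_fun m1 m2 (s1 : 'S_m1) (s2 : 'S_m2) (i : 'I_(m1 + m2)) : 'I_(m1 + m2) :=
  unsplit (match split i with inl k => inl (s1 k) | inr k => inr (s2 k) end).

Lemma pprod_inj m1 m2 (s1 : 'S_m1) (s2 : 'S_m2) : injective (pprod_fun s1 s2).
Proof.
move=> i j; rewrite /pprod_fun => /(congr1 split); rewrite !unsplitK => E.
apply: (can_inj splitK).
by move: E; case: (split i) => [k|k]; case: (split j) => [l|l] //= [/perm_inj ->].
Qed.

Definition pprod m1 m2 (s1 : 'S_m1) (s2 : 'S_m2) : 'S_(m1 + m2) := perm (@pprod_inj m1 m2 s1 s2).

(* block transposition  blk m1 m2 : i |-> m1 + i  if i < m2,  i - m2 otherwise *)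
Definition blk_fun m1 m2 (i : 'I_(m1 + m2)) : 'I_(m1 + m2) :=
  unsplit (match split (cast_ord (addnC m1 m2) i) with inl k => inr k | inr k => inl k end).

Lemma blk_inj m1 m2 : injective (@blk_fun m1 m2).
Proof.
move=> i j; rewrite /blk_fun => /(congr1 split); rewrite !unsplitK => E.
apply: (@cast_ord_inj _ _ (addnC m1 m2)); apply: (can_inj splitK).
by move: E; case: (split (cast_ord _ i)) => [k|k]; case: (split (cast_ord _ j)) => [l|l] //= [->].
Qed.

Definition blk m1 m2 : 'S_(m1 + m2) := perm (@blk_inj m1 m2).

Record gbimod (K : fieldType) := GBimod {
  bcar : nat -> nat -> lmodType K;
  bdeg : forall m n, int -> bcar m n -> Prop;     (* x is homogeneous of degree d *)
  blact : forall m n, 'S_m -> bcar m n -> bcar m n;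
  bract : forall m n, bcar m n -> 'S_n -> bcar m n
}.
Arguments bdeg {K} _ {m n}.
Arguments blact {K} _ {m n}.
Arguments bract {K} _ {m n}.

Definition is_gbimod (K : fieldType) (B : gbimod K) : Prop :=
  (forall m n d, bdeg B d (0 : bcar B m n)) /\
  (forall m n d (a : K) (x y : bcar B m n),
     bdeg B d x -> bdeg B d y -> bdeg B d (a *: x + y)) /\
  (* B(m,n) is the direct sum of its homogeneous components *)
  (forall m n (x : bcar B m n), exists s : seq (int * bcar B m n),
     [/\ uniq (map fst s), (forall p, p \in s -> bdeg B p.1 p.2) & x = \sum_(p <- s) p.2]) /\
  (forall m n (s : seq (int * bcar B m n)), uniq (map fst s) ->
     (forall p, p \in s -> bdeg B p.1 p.2) -> \sum_(p <- s) p.2 = 0 ->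
     forall p, p \in s -> p.2 = 0) /\
  (forall m n (s : 'S_m) (a : K) (x y : bcar B m n),
     blact B s (a *: x + y) = a *: blact B s x + blact B s y) /\
  (forall m n (s : 'S_n) (a : K) (x y : bcar B m n),
     bract B (a *: x + y) s = a *: bract B x s + bract B y s) /\
  (forall m n d (s : 'S_m) (x : bcar B m n), bdeg B d x -> bdeg B d (blact B s x)) /\
  (forall m n d (s : 'S_n) (x : bcar B m n), bdeg B d x -> bdeg B d (bract B x s)) /\
  (forall m n (x : bcar B m n), blact B 1%g x = x) /\
  (forall m n (s t : 'S_m) (x : bcar B m n), blact B (s * t)%g x = blact B s (blact B t x)) /\
  (forall m n (x : bcar B m n), bract B x 1%g = x) /\
  (forall m n (s t : 'S_n) (x : bcar B m n), bract B x (s * t)%g = bract B (bract B x s) t) /\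
  (forall m n (s : 'S_m) (t : 'S_n) (x : bcar B m n),
     bract B (blact B s x) t = blact B s (bract B x t)).

Definition is_bimod_map (K : fieldType) (B B' : gbimod K) (d : int)
  (F : forall m n, bcar B m n -> bcar B' m n) : Prop :=
  (forall m n (a : K) (x y : bcar B m n), F m n (a *: x + y) = a *: F m n x + F m n y) /\
  (forall m n k (x : bcar B m n), bdeg B k x -> bdeg B' (k + d) (F m n x)) /\
  (forall m n (s : 'S_m) (x : bcar B m n), F m n (blact B s x) = blact B' s (F m n x)) /\
  (forall m n (s : 'S_n) (x : bcar B m n), F m n (bract B x s) = bract B' (F m n x) s).

Record gprop (K : fieldType) := GProp {
  pbim :> gbimod K;
  vcomp : forall m n k, bcar pbim m n -> bcar pbim n k -> bcar pbim m k;
  hcomp : forall m1 n1 m2 n2, bcar pbim m1 n1 -> bcar pbim m2 n2 ->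
            bcar pbim (m1 + m2) (n1 + n2);
  punit : forall n, bcar pbim n n
}.
Arguments vcomp {K} _ {m n k}.
Arguments hcomp {K} _ {m1 n1 m2 n2}.
Arguments punit {K} _ n.

Definition is_gprop (K : fieldType) (P : gprop K) : Prop :=
  is_gbimod P /\
  (forall m n k (a : K) (f f' : bcar P m n) (g : bcar P n k),
     vcomp P (a *: f + f') g = a *: vcomp P f g + vcomp P f' g) /\
  (forall m n k (a : K) (f : bcar P m n) (g g' : bcar P n k),
     vcomp P f (a *: g + g') = a *: vcomp P f g + vcomp P f g') /\
  (forall m1 n1 m2 n2 (a : K) (f f' : bcar P m1 n1) (g : bcar P m2 n2),
     hcomp P (a *: f + f') g = a *: hcomp P f g + hcomp P f' g) /\
  (forall m1 n1 m2 n2 (a : K) (f : bcar P m1 n1) (g g' : bcar P m2 n2),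
     hcomp P f (a *: g + g') = a *: hcomp P f g + hcomp P f g') /\
  (forall m n k a b (f : bcar P m n) (g : bcar P n k),
     bdeg P a f -> bdeg P b g -> bdeg P (a + b) (vcomp P f g)) /\
  (forall m1 n1 m2 n2 a b (f : bcar P m1 n1) (g : bcar P m2 n2),
     bdeg P a f -> bdeg P b g -> bdeg P (a + b) (hcomp P f g)) /\
  (forall n, bdeg P 0 (punit P n)) /\
  (forall m n k l (f : bcar P m n) (g : bcar P n k) (h : bcar P k l),
     vcomp P (vcomp P f g) h = vcomp P f (vcomp P g h)) /\
  (forall m1 n1 m2 n2 m3 n3 (f : bcar P m1 n1) (g : bcar P m2 n2) (h : bcar P m3 n3),
     hcomp P (hcomp P f g) h =
     castP (fun i j => bcar P i j) (addnA m1 m2 m3) (addnA n1 n2 n3) (hcomp P f (hcomp P g h))) /\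
  (forall m n (f : bcar P m n), vcomp P (punit P m) f = f) /\
  (forall m n (f : bcar P m n), vcomp P f (punit P n) = f) /\
  (forall m n, hcomp P (punit P m) (punit P n) = punit P (m + n)) /\
  (forall m n (f : bcar P m n), castP (fun i j => bcar P i j) (add0n m) (add0n n) (hcomp P (punit P 0) f) = f) /\
  (forall m n (f : bcar P m n), castP (fun i j => bcar P i j) (addn0 m) (addn0 n) (hcomp P f (punit P 0)) = f) /\
  (forall m1 n1 k1 m2 n2 k2 a b (f1 : bcar P m1 n1) (f2 : bcar P m2 n2)
          (g1 : bcar P n1 k1) (g2 : bcar P n2 k2),
     bdeg P a f2 -> bdeg P b g1 ->
     vcomp P (hcomp P f1 f2) (hcomp P g1 g2) =
     ksgn a b *: hcomp P (vcomp P f1 g1) (vcomp P f2 g2)) /\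
  (forall m n k (s : 'S_m) (f : bcar P m n) (g : bcar P n k),
     blact P s (vcomp P f g) = vcomp P (blact P s f) g) /\
  (forall m n k (s : 'S_k) (f : bcar P m n) (g : bcar P n k),
     bract P (vcomp P f g) s = vcomp P f (bract P g s)) /\
  (forall m n k (s : 'S_n) (f : bcar P m n) (g : bcar P n k),
     vcomp P (bract P f s) g = vcomp P f (blact P s g)) /\
  (forall m1 n1 m2 n2 (s1 : 'S_m1) (s2 : 'S_m2) (f : bcar P m1 n1) (g : bcar P m2 n2),
     hcomp P (blact P s1 f) (blact P s2 g) = blact P (pprod s1 s2) (hcomp P f g)) /\
  (forall m1 n1 m2 n2 (s1 : 'S_n1) (s2 : 'S_n2) (f : bcar P m1 n1) (g : bcar P m2 n2),
     hcomp P (bract P f s1) (bract P g s2) = bract P (hcomp P f g) (pprod s1 s2)) /\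
  (forall m1 n1 m2 n2 a b (f : bcar P m1 n1) (g : bcar P m2 n2),
     bdeg P a f -> bdeg P b g ->
     castP (fun i j => bcar P i j) (addnC m2 m1) (addnC n2 n1) (hcomp P g f) =
     ksgn a b *: bract P (blact P (blk m1 m2) (hcomp P f g)) (blk n1 n2)^-1%g).

Definition is_prop_morph (K : fieldType) (P Q : gprop K)
  (F : forall m n, bcar P m n -> bcar Q m n) : Prop :=
  is_bimod_map 0 F /\
  (forall m n k (f : bcar P m n) (g : bcar P n k),
     F m k (vcomp P f g) = vcomp Q (F m n f) (F n k g)) /\
  (forall m1 n1 m2 n2 (f : bcar P m1 n1) (g : bcar P m2 n2),
     F _ _ (hcomp P f g) = hcomp Q (F m1 n1 f) (F m2 n2 g)) /\
  (forall n, F n n (punit P n) = punit Q n).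

Arguments is_prop_morph {K} P Q F.

Definition is_free_prop (K : fieldType) (E : gbimod K) (M : gprop K)
  (iota : forall m n, bcar E m n -> bcar M m n) : Prop :=
  is_gbimod E /\ is_gprop M /\ is_bimod_map 0 iota /\
  forall Q : gprop K, is_gprop Q ->
  forall u : forall m n, bcar E m n -> bcar Q m n, is_bimod_map 0 u ->
  (exists F, is_prop_morph M Q F /\ forall m n (e : bcar E m n), F m n (iota m n e) = u m n e) /\
  (forall F G, is_prop_morph M Q F -> is_prop_morph M Q G ->
     (forall m n (e : bcar E m n), F m n (iota m n e) = G m n (iota m n e)) ->
     forall m n (x : bcar M m n), F m n x = G m n x).

Arguments is_free_prop {K} E M iota.

Definition is_coproduct (K : fieldType) (M P C : gprop K)
  (iM : forall m n, bcar M m n -> bcar C m n)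
  (iP : forall m n, bcar P m n -> bcar C m n) : Prop :=
  is_gprop M /\ is_gprop P /\ is_gprop C /\
  is_prop_morph M C iM /\ is_prop_morph P C iP /\
  forall Q : gprop K, is_gprop Q ->
  forall F G, is_prop_morph M Q F -> is_prop_morph P Q G ->
  (exists H, [/\ is_prop_morph C Q H,
     (forall m n (x : bcar M m n), H m n (iM m n x) = F m n x) &
     (forall m n (y : bcar P m n), H m n (iP m n y) = G m n y)]) /\
  (forall H H', is_prop_morph C Q H -> is_prop_morph C Q H' ->
     (forall m n (x : bcar M m n), H m n (iM m n x) = H' m n (iM m n x)) ->
     (forall m n (y : bcar P m n), H m n (iP m n y) = H' m n (iP m n y)) ->
     forall m n (z : bcar C m n), H m n z = H' m n z).

Arguments is_coproduct {K} M P C iM iP.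

(* derivations of degree d from P to U, U a P-module via the PROP map i *)
Definition is_deriv (K : fieldType) (P U : gprop K)
  (i : forall m n, bcar P m n -> bcar U m n) (d : int)
  (D : forall m n, bcar P m n -> bcar U m n) : Prop :=
  is_bimod_map d D /\
  (forall m n k a (f : bcar P m n) (g : bcar P n k), bdeg P a f ->
     D m k (vcomp P f g) =
     vcomp U (D m n f) (i n k g) + ksgn d a *: vcomp U (i m n f) (D n k g)) /\
  (forall m1 n1 m2 n2 a (f : bcar P m1 n1) (g : bcar P m2 n2), bdeg P a f ->
     D _ _ (hcomp P f g) =
     hcomp U (D m1 n1 f) (i m2 n2 g) + ksgn d a *: hcomp U (i m1 n1 f) (D m2 n2 g)).

Definition is_tilde (K : fieldType) (M P C : gprop K)
  (iM : forall m n, bcar M m n -> bcar C m n)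
  (iP : forall m n, bcar P m n -> bcar C m n) (d : int)
  (phi : forall m n, bcar M m n -> bcar C m n)
  (phit : forall m n, bcar C m n -> bcar C m n) : Prop :=
  is_deriv (fun m n (z : bcar C m n) => z) d phit /\
  (forall m n (x : bcar M m n), phit m n (iM m n x) = phi m n x) /\
  (forall m n (y : bcar P m n), phit m n (iP m n y) = 0).

(* X = theta <> phi = (-1)^{|theta||phi|} Ex(phit o theta|_E), for theta of
   degree a and phi of degree b: X is the derivation M -> M*P of degree a+b
   whose restriction to the generators E is (-1)^{ab} phit o theta o iota *)
Definition is_diamond (K : fieldType) (E : gbimod K) (M P C : gprop K)
  (iota : forall m n, bcar E m n -> bcar M m n)
  (iM : forall m n, bcar M m n -> bcar C m n)
  (iP : forall m n, bcar P m n -> bcar C m n) (a b : int)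
  (theta phi X : forall m n, bcar M m n -> bcar C m n) : Prop :=
  is_deriv iM (a + b) X /\
  exists phit, is_tilde iM iP b phi phit /\
    forall m n (e : bcar E m n),
      X m n (iota m n e) = ksgn a b *: phit m n (theta m n (iota m n e)).

(* A derivation D : A -> U of degree d along a PROP map i is the same thing as
   the PROP map x |-> i x + eps D x from A to the dual numbers U[eps], eps of
   degree d and square zero.  By the universal properties, a derivation of the
   free PROP F(E) that vanishes on E is zero, and so is a derivation of M * P
   vanishing on M and on P.  Hence phi |-> phit is well defined, and for phi, psi
   of degrees b, c the graded commutator psit phit - (-1)^(bc) phit psit, being a
   derivation of M * P that vanishes on P, equals
   (-1)^(bc) (phi <> psi)~ - (psi <> phi)~ (compare both on E).  Both sides of
   the claimed identity are derivations of M, so it suffices to compare them on a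
   generator e, where they reduce to this commutator formula applied to theta e. *)

From Pilot Require Import Defs.
From HB Require Import structures.
From mathcomp Require Import all_boot all_order all_fingroup all_algebra ring.
From Stdlib Require Import ClassicalEpsilon.
Import GRing.Theory.
Local Open Scope ring_scope.
Set Implicit Arguments. Unset Strict Implicit. Unset Printing Implicit Defensive.

Lemma ksgnC {K : fieldType} a b : ksgn a b = ksgn b a :> K.
Proof. by rewrite /ksgn mulrC. Qed.

Lemma ksgnDr {K : fieldType} a b c : ksgn a (b + c) = ksgn a b * ksgn a c :> K.
Proof.
have sgnE (z : int) : (-1 : K) ^+ absz z = (-1) ^ z.
  by case: z => // n; rewrite NegzE -exprnN invr_sign.
by rewrite /ksgn mulrDr !sgnE expfzDr // oppr_eq0 oner_eq0.
Qed.

Lemma ksgnDl {K : fieldType} a b c : ksgn (a + b) c = ksgn a c * ksgn b c :> K.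
Proof. by rewrite ksgnC ksgnDr !(ksgnC c). Qed.

Lemma ksgn0r {K : fieldType} a : ksgn a 0 = 1 :> K.
Proof. by rewrite /ksgn mulr0. Qed.

Lemma ksgnK {K : fieldType} a b : ksgn a b * ksgn a b = 1 :> K.
Proof. by rewrite /ksgn -exprD addnn -muln2 exprM sqrr_sign. Qed.

Section LinearMap.
Variables (K : fieldType) (V W : lmodType K) (f : V -> W).
Hypothesis f_lin : linear f.

Lemma lin0 : f 0 = 0.
Proof.
have := f_lin 1 0 0; rewrite !scale1r addr0 => e.
by apply: (@addrI _ (f 0)); rewrite addr0 -e.
Qed.
Lemma linD x y : f (x + y) = f x + f y.
Proof. by have := f_lin 1 x y; rewrite !scale1r. Qed.
Lemma linZ a x : f (a *: x) = a *: f x.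
Proof. by have := f_lin a x 0; rewrite !addr0 lin0 addr0. Qed.
Lemma linB x y : f (x - y) = f x - f y.
Proof. by rewrite linD -scaleN1r linZ scaleN1r. Qed.
End LinearMap.

Section HomogeneousFamily.
Variables (K : fieldType) (V : lmodType K) (deg : int -> V -> Prop).
Hypotheses (deg0 : forall d, deg d 0)
  (deg_lin : forall d a x y, deg d x -> deg d y -> deg d (a *: x + y)).

Definition homogeneous (s : seq (int * V)) := forall p, p \in s -> deg p.1 p.2.

Let deg_sum (I : eqType) (r : seq I) (P : pred I) (F : I -> V) k :
  (forall i, i \in r -> P i -> deg k (F i)) -> deg k (\sum_(i <- r | P i) F i).
Proof.
elim: r => [|x r IH] H; first by rewrite big_nil.
have IHr : deg k (\sum_(i <- r | P i) F i) by apply: IH => i ri; apply: H; rewrite inE ri orbT.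
rewrite big_cons; case: ifP => // Px.
by rewrite -[F x]scale1r; apply: deg_lin => //; apply: H; rewrite ?mem_head.
Qed.

Lemma homogeneous_merge s : homogeneous s ->
  exists t, [/\ uniq (map fst t), homogeneous t &
    forall w : int -> K, \sum_(p <- t) w p.1 *: p.2 = \sum_(p <- s) w p.1 *: p.2].
Proof.
elim: s => [|q s IH] hs; first by exists [::]; split => // p.
have [|t [ut ht wt]] := IH; first by move=> p ps; apply: hs; rewrite inE ps orbT.
exists ((q.1, q.2 + \sum_(p <- t | p.1 == q.1) p.2) :: [seq p <- t | p.1 != q.1]); split.
- rewrite /=; have -> : map fst [seq p <- t | p.1 != q.1] = [seq k <- map fst t | k != q.1].
    by rewrite filter_map.
  by rewrite mem_filter eqxx filter_uniq.
- move=> p; rewrite inE => /predU1P [-> | ] /=.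
    rewrite -[q.2]scale1r; apply: deg_lin; first by apply: hs; rewrite mem_head.
    by apply: deg_sum => i ti /eqP <-; apply: ht.
  by rewrite mem_filter => /andP [_]; apply: ht.
- move=> w; rewrite !big_cons /= big_filter -wt.
  rewrite [X in _ = _ + X](bigID (fun p => p.1 == q.1)) /= scalerDr scaler_sumr addrA.
  by congr (_ + _ + _); apply: eq_bigr => p /eqP ->.
Qed.
End HomogeneousFamily.

Section GradedBimodule.
Variables (K : fieldType) (B : gbimod K).
Hypothesis hB : is_gbimod B.

Lemma bdeg0 m n d : bdeg B d (0 : bcar B m n).
Proof. by move: hB => h; red in h; decompose [and] h; eauto. Qed.
Lemma bdeg_lin m n d a (x y : bcar B m n) : bdeg B d x -> bdeg B d y -> bdeg B d (a *: x + y).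
Proof. by move: hB => h; red in h; decompose [and] h; eauto. Qed.
Lemma homogeneous_decomposition m n (x : bcar B m n) :
  exists s, [/\ uniq (map fst s), homogeneous (bdeg B) s & x = \sum_(p <- s) p.2].
Proof. by move: hB => h; red in h; decompose [and] h; eauto. Qed.
Lemma homogeneous_components_eq0 m n (s : seq (int * bcar B m n)) :
  uniq (map fst s) -> homogeneous (bdeg B) s -> \sum_(p <- s) p.2 = 0 ->
  forall p, p \in s -> p.2 = 0.
Proof. by move: hB => h; red in h; decompose [and] h; eauto. Qed.
Lemma blact_linear m n (s : 'S_m) : linear (blact B s : bcar B m n -> _).
Proof. by case: hB => _ [_ [_ [_ [H _]]]]; apply: H. Qed.
Lemma bract_linear m n (s : 'S_n) : linear (bract B ^~ s : bcar B m n -> _).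
Proof. by case: hB => _ [_ [_ [_ [_ [H _]]]]]; apply: H. Qed.
Lemma bdeg_blact m n d (s : 'S_m) (x : bcar B m n) : bdeg B d x -> bdeg B d (blact B s x).
Proof. by move: hB => h; red in h; decompose [and] h; eauto. Qed.
Lemma bdeg_bract m n d (s : 'S_n) (x : bcar B m n) : bdeg B d x -> bdeg B d (bract B x s).
Proof. by move: hB => h; red in h; decompose [and] h; eauto. Qed.
Lemma blact1 m n (x : bcar B m n) : blact B 1%g x = x.
Proof. by move: hB => h; red in h; decompose [and] h; eauto. Qed.
Lemma blactM m n (s t : 'S_m) (x : bcar B m n) : blact B (s * t)%g x = blact B s (blact B t x).
Proof. by move: hB => h; red in h; decompose [and] h; eauto. Qed.
Lemma bract1 m n (x : bcar B m n) : bract B x 1%g = x.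
Proof. by move: hB => h; red in h; decompose [and] h; eauto. Qed.
Lemma bractM m n (s t : 'S_n) (x : bcar B m n) : bract B x (s * t)%g = bract B (bract B x s) t.
Proof. by move: hB => h; red in h; decompose [and] h; eauto. Qed.
Lemma bract_blact m n (s : 'S_m) (t : 'S_n) (x : bcar B m n) :
  bract B (blact B s x) t = blact B s (bract B x t).
Proof. by move: hB => h; red in h; decompose [and] h; eauto. Qed.

Lemma bdegZ m n d a (x : bcar B m n) : bdeg B d x -> bdeg B d (a *: x).
Proof. by move=> hx; rewrite -[_ *: x]addr0; apply: bdeg_lin => //; apply: bdeg0. Qed.
Lemma bdegD m n d (x y : bcar B m n) : bdeg B d x -> bdeg B d y -> bdeg B d (x + y).
Proof. by move=> hx hy; rewrite -[x]scale1r; apply: bdeg_lin. Qed.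
Lemma bdegB m n d (x y : bcar B m n) : bdeg B d x -> bdeg B d y -> bdeg B d (x - y).
Proof. by move=> hx hy; apply: bdegD => //; rewrite -scaleN1r; apply: bdegZ. Qed.

Lemma homogeneous_weighted_sum_eq0 m n (s : seq (int * bcar B m n)) :
  homogeneous (bdeg B) s -> \sum_(p <- s) p.2 = 0 ->
  forall w : int -> K, \sum_(p <- s) w p.1 *: p.2 = 0.
Proof.
move=> hs s0 w; have [t [ut ht wt]] := homogeneous_merge (@bdeg0 m n) (@bdeg_lin m n) hs.
have t0 : \sum_(p <- t) p.2 = 0.
  by have := wt (fun=> 1); rewrite !(eq_bigr _ (fun p _ => scale1r p.2)) => ->.
by rewrite -wt big1_seq // => p /andP [_ tp]; rewrite (homogeneous_components_eq0 ut ht t0 tp) scaler0.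
Qed.

Lemma linear_homogeneous_ext m n (W : lmodType K) (F G : bcar B m n -> W) :
  linear F -> linear G -> (forall k x, bdeg B k x -> F x = G x) -> forall x, F x = G x.
Proof.
move=> hF hG FG x; have [s [_ hs ->]] := homogeneous_decomposition x.
elim: s hs => [|p s IH] hs; first by rewrite !big_nil (lin0 hF) (lin0 hG).
rewrite big_cons !(linD hF, linD hG) IH => [|q sq]; last by apply: hs; rewrite inE sq orbT.
by rewrite (FG p.1) //; apply: hs; rewrite mem_head.
Qed.
End GradedBimodule.

Section Twist.
Variables (K : fieldType) (B : gbimod K) (d : int).
Hypothesis hB : is_gbimod B.

(* x |-> (-1)^(d |x|) x, extended linearly: [epsilon] picks some homogeneous
   decomposition of x, and by [twistE] the choice does not matter. *)
Definition twist m n (x : bcar B m n) : bcar B m n :=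
  epsilon (inhabits 0) (fun y => exists s, [/\ homogeneous (bdeg B) s,
    x = \sum_(p <- s) p.2 & y = \sum_(p <- s) ksgn d p.1 *: p.2]).

Lemma twistE m n (x : bcar B m n) s : homogeneous (bdeg B) s -> x = \sum_(p <- s) p.2 ->
  twist x = \sum_(p <- s) ksgn d p.1 *: p.2.
Proof.
move=> hs xs; rewrite /twist.
set P := fun y => _; have [s' [hs' xs' ->]] : P (epsilon (inhabits 0) P).
  by apply: epsilon_spec; exists (\sum_(p <- s) ksgn d p.1 *: p.2), s.
pose r := s ++ [seq (p.1, - p.2) | p <- s'].
have hr : homogeneous (bdeg B) r.
  move=> p; rewrite mem_cat => /orP [/hs // | /mapP [q sq ->] /=].
  by rewrite -scaleN1r; apply: (bdegZ hB); apply: hs'.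
have r0 : \sum_(p <- r) p.2 = 0 by rewrite big_cat big_map /= sumrN -xs -xs' subrr.
have := homogeneous_weighted_sum_eq0 hB hr r0 (ksgn d).
rewrite big_cat big_map /=; under [X in _ + X]eq_bigr do rewrite scalerN.
by rewrite sumrN => /subr0_eq.
Qed.

Lemma twist_hom m n k (x : bcar B m n) : bdeg B k x -> twist x = ksgn d k *: x.
Proof.
move=> hx; rewrite (@twistE _ _ _ [:: (k, x)]) ?big_seq1 //.
by move=> p; rewrite inE => /eqP ->.
Qed.

Lemma twist_linear m n : linear (@twist m n).
Proof.
move=> a x y; have [s [_ hs xs]] := homogeneous_decomposition hB x.
have [t [_ ht yt]] := homogeneous_decomposition hB y.
rewrite (twistE hs xs) (twistE ht yt) (@twistE _ _ _ ([seq (p.1, a *: p.2) | p <- s] ++ t)).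
- by rewrite big_cat big_map scaler_sumr; congr (_ + _); apply: eq_bigr => p _; rewrite !scalerA mulrC.
- move=> p; rewrite mem_cat => /orP [/mapP [q sq ->] /= | /ht //].
  by apply: (bdegZ hB); apply: hs.
- by rewrite big_cat big_map -scaler_sumr -xs -yt.
Qed.

Lemma bdeg_twist m n k (x : bcar B m n) : bdeg B k x -> bdeg B k (twist x).
Proof. by move=> hx; rewrite (twist_hom hx); apply: bdegZ. Qed.
End Twist.

Section GradedProp.
Variables (K : fieldType) (U : gprop K).
Hypothesis hU : is_gprop U.
Local Notation castU := (castP (fun i j => bcar U i j)).

Lemma gprop_bimod : is_gbimod U. Proof. by case: hU. Qed.
Lemma vcomp_linl m n k (g : bcar U n k) : linear (vcomp U ^~ g : bcar U m n -> _).
Proof. by move=> a x y; case: hU => _ [H _]; apply: H. Qed.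
Lemma vcomp_linr m n k (f : bcar U m n) : linear (vcomp U f : bcar U n k -> _).
Proof. by move=> a x y; case: hU => _ [_ [H _]]; apply: H. Qed.
Lemma hcomp_linl m1 n1 m2 n2 (g : bcar U m2 n2) : linear (hcomp U ^~ g : bcar U m1 n1 -> _).
Proof. by move=> a x y; case: hU => _ [_ [_ [H _]]]; apply: H. Qed.
Lemma hcomp_linr m1 n1 m2 n2 (f : bcar U m1 n1) : linear (hcomp U f : bcar U m2 n2 -> _).
Proof. by move=> a x y; case: hU => _ [_ [_ [_ [H _]]]]; apply: H. Qed.
Lemma bdeg_vcomp m n k a b (f : bcar U m n) (g : bcar U n k) :
  bdeg U a f -> bdeg U b g -> bdeg U (a + b) (vcomp U f g).
Proof. by case: hU => _ h; decompose [and] h; eauto. Qed.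
Lemma bdeg_hcomp m1 n1 m2 n2 a b (f : bcar U m1 n1) (g : bcar U m2 n2) :
  bdeg U a f -> bdeg U b g -> bdeg U (a + b) (hcomp U f g).
Proof. by case: hU => _ h; decompose [and] h; eauto. Qed.
Lemma bdeg_punit n : bdeg U 0 (punit U n).
Proof. by case: hU => _ h; decompose [and] h. Qed.
Lemma vcompA m n k l (f : bcar U m n) (g : bcar U n k) (h : bcar U k l) :
  vcomp U (vcomp U f g) h = vcomp U f (vcomp U g h).
Proof. by case: hU => _ h'; decompose [and] h'. Qed.
Lemma hcompA m1 n1 m2 n2 m3 n3 (f : bcar U m1 n1) (g : bcar U m2 n2) (h : bcar U m3 n3) :
  hcomp U (hcomp U f g) h = castU (addnA m1 m2 m3) (addnA n1 n2 n3) (hcomp U f (hcomp U g h)).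
Proof. by case: hU => _ h'; decompose [and] h'. Qed.
Lemma vcomp1l m n (f : bcar U m n) : vcomp U (punit U m) f = f.
Proof. by case: hU => _ h; decompose [and] h. Qed.
Lemma vcomp1r m n (f : bcar U m n) : vcomp U f (punit U n) = f.
Proof. by case: hU => _ h; decompose [and] h. Qed.
Lemma hcomp_punit m n : hcomp U (punit U m) (punit U n) = punit U (m + n).
Proof. by case: hU => _ h; decompose [and] h. Qed.
Lemma hcomp1l m n (f : bcar U m n) : castU (add0n m) (add0n n) (hcomp U (punit U 0) f) = f.
Proof. by case: hU => _ h; decompose [and] h. Qed.
Lemma hcomp1r m n (f : bcar U m n) : castU (addn0 m) (addn0 n) (hcomp U f (punit U 0)) = f.
Proof. by case: hU => _ h; decompose [and] h. Qed.
Lemma vcomp_hcomp m1 n1 k1 m2 n2 k2 a b (f1 : bcar U m1 n1) (f2 : bcar U m2 n2)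
    (g1 : bcar U n1 k1) (g2 : bcar U n2 k2) : bdeg U a f2 -> bdeg U b g1 ->
  vcomp U (hcomp U f1 f2) (hcomp U g1 g2) = ksgn a b *: hcomp U (vcomp U f1 g1) (vcomp U f2 g2).
Proof. by case: hU => _ h; decompose [and] h; eauto. Qed.
Lemma blact_vcomp m n k (s : 'S_m) (f : bcar U m n) (g : bcar U n k) :
  blact U s (vcomp U f g) = vcomp U (blact U s f) g.
Proof. by case: hU => _ h; decompose [and] h. Qed.
Lemma bract_vcomp m n k (s : 'S_k) (f : bcar U m n) (g : bcar U n k) :
  bract U (vcomp U f g) s = vcomp U f (bract U g s).
Proof. by case: hU => _ h; decompose [and] h. Qed.
Lemma vcomp_bract m n k (s : 'S_n) (f : bcar U m n) (g : bcar U n k) :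
  vcomp U (bract U f s) g = vcomp U f (blact U s g).
Proof. by case: hU => _ h; decompose [and] h. Qed.
Lemma hcomp_blact m1 n1 m2 n2 (s1 : 'S_m1) (s2 : 'S_m2) (f : bcar U m1 n1) (g : bcar U m2 n2) :
  hcomp U (blact U s1 f) (blact U s2 g) = blact U (Defs.pprod s1 s2) (hcomp U f g).
Proof. by case: hU => _ h; decompose [and] h. Qed.
Lemma hcomp_bract m1 n1 m2 n2 (s1 : 'S_n1) (s2 : 'S_n2) (f : bcar U m1 n1) (g : bcar U m2 n2) :
  hcomp U (bract U f s1) (bract U g s2) = bract U (hcomp U f g) (Defs.pprod s1 s2).
Proof. by case: hU => _ h; decompose [and] h. Qed.
Lemma hcompC m1 n1 m2 n2 a b (f : bcar U m1 n1) (g : bcar U m2 n2) :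
  bdeg U a f -> bdeg U b g ->
  castU (addnC m2 m1) (addnC n2 n1) (hcomp U g f) =
  ksgn a b *: bract U (blact U (blk m1 m2) (hcomp U f g)) (blk n1 n2)^-1%g.
Proof. by case: hU => _ h; decompose [and] h; eauto. Qed.

Let hB := gprop_bimod.

Lemma vcompDl m n k (g : bcar U n k) (x y : bcar U m n) : vcomp U (x + y) g = vcomp U x g + vcomp U y g.
Proof. by have /= := linD (vcomp_linl g) x y. Qed.
Lemma vcompZl m n k (g : bcar U n k) a (x : bcar U m n) : vcomp U (a *: x) g = a *: vcomp U x g.
Proof. by have /= := linZ (vcomp_linl g) a x. Qed.
Lemma vcompBl m n k (g : bcar U n k) (x y : bcar U m n) : vcomp U (x - y) g = vcomp U x g - vcomp U y g.
Proof. by have /= := linB (vcomp_linl g) x y. Qed.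
Lemma vcomp0l m n k (g : bcar U n k) : vcomp U (0 : bcar U m n) g = 0.
Proof. by have /= := lin0 (vcomp_linl g) . Qed.
Lemma vcompDr m n k (f : bcar U m n) (x y : bcar U n k) : vcomp U f (x + y) = vcomp U f x + vcomp U f y.
Proof. by have /= := linD (vcomp_linr f) x y. Qed.
Lemma vcompZr m n k (f : bcar U m n) a (x : bcar U n k) : vcomp U f (a *: x) = a *: vcomp U f x.
Proof. by have /= := linZ (vcomp_linr f) a x. Qed.
Lemma vcompBr m n k (f : bcar U m n) (x y : bcar U n k) : vcomp U f (x - y) = vcomp U f x - vcomp U f y.
Proof. by have /= := linB (vcomp_linr f) x y. Qed.
Lemma vcomp0r m n k (f : bcar U m n) : vcomp U f (0 : bcar U n k) = 0.
Proof. by have /= := lin0 (vcomp_linr f) . Qed.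
Lemma hcompDl m1 n1 m2 n2 (g : bcar U m2 n2) (x y : bcar U m1 n1) :
  hcomp U (x + y) g = hcomp U x g + hcomp U y g.
Proof. by have /= := linD (hcomp_linl g) x y. Qed.
Lemma hcompZl m1 n1 m2 n2 (g : bcar U m2 n2) a (x : bcar U m1 n1) : hcomp U (a *: x) g = a *: hcomp U x g.
Proof. by have /= := linZ (hcomp_linl g) a x. Qed.
Lemma hcompBl m1 n1 m2 n2 (g : bcar U m2 n2) (x y : bcar U m1 n1) :
  hcomp U (x - y) g = hcomp U x g - hcomp U y g.
Proof. by have /= := linB (hcomp_linl g) x y. Qed.
Lemma hcomp0l m1 n1 m2 n2 (g : bcar U m2 n2) : hcomp U (0 : bcar U m1 n1) g = 0.
Proof. by have /= := lin0 (hcomp_linl g) . Qed.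
Lemma hcompDr m1 n1 m2 n2 (f : bcar U m1 n1) (x y : bcar U m2 n2) :
  hcomp U f (x + y) = hcomp U f x + hcomp U f y.
Proof. by have /= := linD (hcomp_linr f) x y. Qed.
Lemma hcompZr m1 n1 m2 n2 (f : bcar U m1 n1) a (x : bcar U m2 n2) : hcomp U f (a *: x) = a *: hcomp U f x.
Proof. by have /= := linZ (hcomp_linr f) a x. Qed.
Lemma hcompBr m1 n1 m2 n2 (f : bcar U m1 n1) (x y : bcar U m2 n2) :
  hcomp U f (x - y) = hcomp U f x - hcomp U f y.
Proof. by have /= := linB (hcomp_linr f) x y. Qed.
Lemma hcomp0r m1 n1 m2 n2 (f : bcar U m1 n1) : hcomp U f (0 : bcar U m2 n2) = 0.
Proof. by have /= := lin0 (hcomp_linr f) . Qed.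
Lemma blactD m n (s : 'S_m) (x y : bcar U m n) : blact U s (x + y) = blact U s x + blact U s y.
Proof. by have /= := linD (blact_linear hB s) x y. Qed.
Lemma blactZ m n (s : 'S_m) a (x : bcar U m n) : blact U s (a *: x) = a *: blact U s x.
Proof. by have /= := linZ (blact_linear hB s) a x. Qed.
Lemma blactB m n (s : 'S_m) (x y : bcar U m n) : blact U s (x - y) = blact U s x - blact U s y.
Proof. by have /= := linB (blact_linear hB s) x y. Qed.
Lemma blact0 m n (s : 'S_m) : blact U s (0 : bcar U m n) = 0.
Proof. by have /= := lin0 (blact_linear hB s) . Qed.
Lemma bractD m n (s : 'S_n) (x y : bcar U m n) : bract U (x + y) s = bract U x s + bract U y s.
Proof. by have /= := linD (bract_linear hB s) x y. Qed.
Lemma bractZ m n (s : 'S_n) a (x : bcar U m n) : bract U (a *: x) s = a *: bract U x s.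
Proof. by have /= := linZ (bract_linear hB s) a x. Qed.
Lemma bractB m n (s : 'S_n) (x y : bcar U m n) : bract U (x - y) s = bract U x s - bract U y s.
Proof. by have /= := linB (bract_linear hB s) x y. Qed.
Lemma bract0 m n (s : 'S_n) : bract U (0 : bcar U m n) s = 0.
Proof. by have /= := lin0 (bract_linear hB s) . Qed.

Variable d : int.
Local Notation tw := (twist d).

Lemma twistD m n (x y : bcar U m n) : tw (x + y) = tw x + tw y.
Proof. by have /= := linD (@twist_linear _ _ d hB m n) x y. Qed.
Lemma twistZ m n a (x : bcar U m n) : tw (a *: x) = a *: tw x.
Proof. by have /= := linZ (@twist_linear _ _ d hB m n) a x. Qed.

Lemma twist_blact m n (s : 'S_m) (x : bcar U m n) : tw (blact U s x) = blact U s (tw x).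
Proof.
apply: (linear_homogeneous_ext hB (F := fun x => tw (blact U s x)) (G := fun x => blact U s (tw x))).
- by move=> a u v /=; rewrite blactD blactZ twistD twistZ.
- by move=> a u v /=; rewrite twistD twistZ blactD blactZ.
by move=> k u hu /=; rewrite (twist_hom d hB hu) (twist_hom d hB (bdeg_blact hB s hu)) blactZ.
Qed.

Lemma twist_bract m n (s : 'S_n) (x : bcar U m n) : tw (bract U x s) = bract U (tw x) s.
Proof.
apply: (linear_homogeneous_ext hB (F := fun x => tw (bract U x s)) (G := fun x => bract U (tw x) s)).
- by move=> a u v /=; rewrite bractD bractZ twistD twistZ.
- by move=> a u v /=; rewrite twistD twistZ bractD bractZ.
by move=> k u hu /=; rewrite (twist_hom d hB hu) (twist_hom d hB (bdeg_bract hB s hu)) bractZ.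
Qed.

Lemma twist_vcomp m n k (f : bcar U m n) (g : bcar U n k) : tw (vcomp U f g) = vcomp U (tw f) (tw g).
Proof.
move: f; apply: (linear_homogeneous_ext hB (F := fun f => tw (vcomp U f g))
                                           (G := fun f => vcomp U (tw f) (tw g))).
- by move=> a u v /=; rewrite vcompDl vcompZl twistD twistZ.
- by move=> a u v /=; rewrite twistD twistZ vcompDl vcompZl.
move=> i f hf /=; move: g.
apply: (linear_homogeneous_ext hB (F := fun g => tw (vcomp U f g)) (G := fun g => vcomp U (tw f) (tw g))).
- by move=> a u v /=; rewrite vcompDr vcompZr twistD twistZ.
- by move=> a u v /=; rewrite twistD twistZ vcompDr vcompZr.
move=> j g hg /=; rewrite (twist_hom d hB (bdeg_vcomp hf hg)) (twist_hom d hB hf) (twist_hom d hB hg).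
by rewrite vcompZl vcompZr scalerA ksgnDr mulrC.
Qed.

Lemma twist_hcomp m1 n1 m2 n2 (f : bcar U m1 n1) (g : bcar U m2 n2) :
  tw (hcomp U f g) = hcomp U (tw f) (tw g).
Proof.
move: f; apply: (linear_homogeneous_ext hB (F := fun f => tw (hcomp U f g))
                                           (G := fun f => hcomp U (tw f) (tw g))).
- by move=> a u v /=; rewrite hcompDl hcompZl twistD twistZ.
- by move=> a u v /=; rewrite twistD twistZ hcompDl hcompZl.
move=> i f hf /=; move: g.
apply: (linear_homogeneous_ext hB (F := fun g => tw (hcomp U f g)) (G := fun g => hcomp U (tw f) (tw g))).
- by move=> a u v /=; rewrite hcompDr hcompZr twistD twistZ.
- by move=> a u v /=; rewrite twistD twistZ hcompDr hcompZr.
move=> j g hg /=; rewrite (twist_hom d hB (bdeg_hcomp hf hg)) (twist_hom d hB hf) (twist_hom d hB hg).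
by rewrite hcompZl hcompZr scalerA ksgnDr mulrC.
Qed.

Lemma twist_punit n : tw (punit U n) = punit U n.
Proof. by rewrite (twist_hom d hB (bdeg_punit n)) ksgn0r scale1r. Qed.
End GradedProp.

Lemma castPD (K : fieldType) (B : gbimod K) m n m' n' (em : m = m') (en : n = n') (x y : bcar B m n) :
  castP (fun i j => bcar B i j) em en (x + y) =
  castP (fun i j => bcar B i j) em en x + castP (fun i j => bcar B i j) em en y.
Proof. by case: m' / em; case: n' / en. Qed.
Lemma castPZ (K : fieldType) (B : gbimod K) m n m' n' (em : m = m') (en : n = n') a (x : bcar B m n) :
  castP (fun i j => bcar B i j) em en (a *: x) = a *: castP (fun i j => bcar B i j) em en x.
Proof. by case: m' / em; case: n' / en. Qed.

(* The dual numbers U[eps] = U + eps U with eps of degree d and eps^2 = 0: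
   in (x1 + eps x2)(y1 + eps y2) = x1 y1 + eps (x2 y1 + (-1)^(d|x1|) x1 y2)
   the sign comes from moving eps past x1. *)
Section DualNumbers.
Variables (K : fieldType) (U : gprop K) (d : int).
Hypothesis hU : is_gprop U.
Let hB := gprop_bimod hU.

Definition dual_bimod : gbimod K := @GBimod K (fun m n => (bcar U m n * bcar U m n)%type)
  (fun m n k z => bdeg U k z.1 /\ bdeg U (k + d) z.2)
  (fun m n s z => (blact U s z.1, blact U s z.2))
  (fun m n z s => (bract U z.1 s, bract U z.2 s)).

Lemma dual_bdeg0 m n k : bdeg dual_bimod k (0 : bcar dual_bimod m n).
Proof. by split; apply: bdeg0. Qed.
Lemma dual_bdeg_lin m n k a (x y : bcar dual_bimod m n) :
  bdeg dual_bimod k x -> bdeg dual_bimod k y -> bdeg dual_bimod k (a *: x + y).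
Proof. by case=> x1 x2 [y1 y2]; split; rewrite linearP; apply: bdeg_lin. Qed.

Lemma dual_decomposition m n (z : bcar dual_bimod m n) :
  exists s, [/\ uniq (map fst s), homogeneous (bdeg dual_bimod) s & z = \sum_(p <- s) p.2].
Proof.
have [s1 [_ h1 e1]] := homogeneous_decomposition hB z.1.
have [s2 [_ h2 e2]] := homogeneous_decomposition hB z.2.
pose r := [seq (p.1, ((p.2, 0) : bcar dual_bimod m n)) | p <- s1] ++
          [seq (p.1 - d, ((0, p.2) : bcar dual_bimod m n)) | p <- s2].
have hr : homogeneous (bdeg dual_bimod) r.
  move=> p; rewrite mem_cat => /orP [] /mapP [q sq ->]; split => /=; try exact: bdeg0.
    exact: h1.
  by rewrite subrK; apply: h2.
have [t [ut ht wt]] := homogeneous_merge (@dual_bdeg0 m n) (@dual_bdeg_lin m n) hr.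
exists t; split => //; have := wt (fun=> 1); rewrite !(eq_bigr _ (fun p _ => scale1r p.2)) => ->.
apply: injective_projections; rewrite raddf_sum big_cat !big_map /= !big1_eq.
  by rewrite addr0 e1.
by rewrite add0r e2.
Qed.

Lemma dual_components_eq0 m n (s : seq (int * bcar dual_bimod m n)) :
  uniq (map fst s) -> homogeneous (bdeg dual_bimod) s -> \sum_(p <- s) p.2 = 0 ->
  forall p, p \in s -> p.2 = 0.
Proof.
move=> us hs s0 p sp.
pose f1 (q : int * bcar dual_bimod m n) := (q.1, q.2.1).
pose f2 (q : int * bcar dual_bimod m n) := (q.1 + d, q.2.2).
have u1 : uniq (map fst (map f1 s)) by rewrite -map_comp.
have u2 : uniq (map fst (map f2 s)).
  by rewrite -map_comp (_ : fst \o f2 = (+%R^~ d) \o fst) // map_comp map_inj_uniq //; apply: addIr.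
have h1 : homogeneous (bdeg U) (map f1 s) by move=> q /mapP [q' sq' ->]; case: (hs q' sq').
have h2 : homogeneous (bdeg U) (map f2 s) by move=> q /mapP [q' sq' ->]; case: (hs q' sq').
have t1 : \sum_(q <- map f1 s) q.2 = 0 by rewrite big_map -[RHS]/(0 : bcar dual_bimod m n).1 -s0 raddf_sum.
have t2 : \sum_(q <- map f2 s) q.2 = 0 by rewrite big_map -[RHS]/(0 : bcar dual_bimod m n).2 -s0 raddf_sum.
have := homogeneous_components_eq0 hB u1 h1 t1 (map_f f1 sp).
have := homogeneous_components_eq0 hB u2 h2 t2 (map_f f2 sp).
by case: p {sp} => k [u v] /= -> ->.
Qed.

Lemma dual_bimodP : is_gbimod dual_bimod.
Proof.
split; first exact: dual_bdeg0.
split; first exact: dual_bdeg_lin.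
split; first exact: dual_decomposition.
split; first exact: dual_components_eq0.
split; first by move=> m n s a x y; apply: injective_projections => /=; apply: (blact_linear hB).
split; first by move=> m n s a x y; apply: injective_projections => /=; apply: (bract_linear hB).
split; first by move=> m n k s x [h1 h2]; split; apply: bdeg_blact.
split; first by move=> m n k s x [h1 h2]; split; apply: bdeg_bract.
split; first by move=> m n [x1 x2] /=; rewrite !blact1.
split; first by move=> m n s t [x1 x2] /=; rewrite !blactM.
split; first by move=> m n [x1 x2] /=; rewrite !bract1.
split; first by move=> m n s t [x1 x2] /=; rewrite !bractM.
by move=> m n s t [x1 x2] /=; rewrite !bract_blact.
Qed.

Definition dual_prop : gprop K := @GProp K dual_bimod
  (fun m n k (x : bcar dual_bimod m n) (y : bcar dual_bimod n k) =>
     ((vcomp U x.1 y.1, vcomp U x.2 y.1 + vcomp U (twist d x.1) y.2) : bcar dual_bimod m k))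
  (fun m1 n1 m2 n2 (x : bcar dual_bimod m1 n1) (y : bcar dual_bimod m2 n2) =>
     ((hcomp U x.1 y.1, hcomp U x.2 y.1 + hcomp U (twist d x.1) y.2) :
        bcar dual_bimod (m1 + m2) (n1 + n2)))
  (fun n => ((punit U n, 0) : bcar dual_bimod n n)).

Lemma castP_dual m n m' n' (em : m = m') (en : n = n') (z : bcar dual_bimod m n) :
  castP (fun i j => bcar dual_bimod i j) em en z =
  (castP (fun i j => bcar U i j) em en z.1, castP (fun i j => bcar U i j) em en z.2).
Proof. by case: m' / em; case: n' / en; case: z. Qed.

Local Notation Q := dual_prop.

Lemma dual_bdeg_vcomp m n k a b (f : bcar Q m n) (g : bcar Q n k) :
  bdeg Q a f -> bdeg Q b g -> bdeg Q (a + b) (vcomp Q f g).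
Proof.
move=> [hf1 hf2] [hg1 hg2]; split => /=; first exact: bdeg_vcomp.
apply: bdegD => //; first by rewrite -addrAC; apply: bdeg_vcomp.
by rewrite -addrA; apply: bdeg_vcomp => //; apply: bdeg_twist.
Qed.

Lemma dual_bdeg_hcomp m1 n1 m2 n2 a b (f : bcar Q m1 n1) (g : bcar Q m2 n2) :
  bdeg Q a f -> bdeg Q b g -> bdeg Q (a + b) (hcomp Q f g).
Proof.
move=> [hf1 hf2] [hg1 hg2]; split => /=; first exact: bdeg_hcomp.
apply: bdegD => //; first by rewrite -addrAC; apply: bdeg_hcomp.
by rewrite -addrA; apply: bdeg_hcomp => //; apply: bdeg_twist.
Qed.

Lemma dual_vcomp_hcomp m1 n1 k1 m2 n2 k2 a b (f1 : bcar Q m1 n1) (f2 : bcar Q m2 n2)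
    (g1 : bcar Q n1 k1) (g2 : bcar Q n2 k2) : bdeg Q a f2 -> bdeg Q b g1 ->
  vcomp Q (hcomp Q f1 f2) (hcomp Q g1 g2) = ksgn a b *: hcomp Q (vcomp Q f1 g1) (vcomp Q f2 g2).
Proof.
move=> [ha1 ha2] [hb1 hb2]; apply: injective_projections => /=; first exact: vcomp_hcomp.
rewrite twist_hcomp // twist_vcomp // (twist_hom d hB ha1) (twist_hom d hB hb1).
rewrite !(vcompDl, vcompDr, hcompDl, hcompDr, vcompZl, vcompZr, hcompZl, hcompZr) //.
rewrite !(vcomp_hcomp hU _ _ ha1 hb1) (vcomp_hcomp hU _ _ ha2 hb1) (vcomp_hcomp hU _ _ ha1 hb2).
rewrite !scalerDr !scalerA addrACA !ksgnDl !ksgnDr.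
congr (_ + _ + (_ + _)); congr (_ *: _); last by ring.
by rewrite (ksgnC a d) mulrCA ksgnK mulr1.
Qed.

Lemma dual_hcompC m1 n1 m2 n2 a b (f : bcar Q m1 n1) (g : bcar Q m2 n2) :
  bdeg Q a f -> bdeg Q b g ->
  castP (fun i j => bcar Q i j) (addnC m2 m1) (addnC n2 n1) (hcomp Q g f) =
  ksgn a b *: bract Q (blact Q (blk m1 m2) (hcomp Q f g)) (blk n1 n2)^-1%g.
Proof.
move=> [hf1 hf2] [hg1 hg2]; rewrite castP_dual.
apply: injective_projections => /=; first exact: hcompC.
rewrite castPD (twist_hom d hB hg1) (twist_hom d hB hf1) hcompZl // castPZ.
rewrite (hcompC hU hf1 hg2) (hcompC hU hf2 hg1) hcompZl // blactD // blactZ // bractD // bractZ //.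
rewrite scalerDr !scalerA addrC !ksgnDl !ksgnDr; congr (_ + _); congr (_ *: _).
  by rewrite mulrCA ksgnK mulr1.
by rewrite (ksgnC a d).
Qed.

Lemma dual_propP : is_gprop Q.
Proof.
split; first exact: dual_bimodP.
split.
  move=> m n k a f f' g; apply: injective_projections => /=; first exact: (vcomp_linl hU).
  by rewrite twistD // twistZ // !vcompDl // !vcompZl // scalerDr addrACA.
split.
  move=> m n k a f g g'; apply: injective_projections => /=; first exact: (vcomp_linr hU).
  by rewrite !vcompDr // !vcompZr // scalerDr addrACA.
split.
  move=> m1 n1 m2 n2 a f f' g; apply: injective_projections => /=; first exact: (hcomp_linl hU).
  by rewrite twistD // twistZ // !hcompDl // !hcompZl // scalerDr addrACA.
split.
  move=> m1 n1 m2 n2 a f g g'; apply: injective_projections => /=; first exact: (hcomp_linr hU).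
  by rewrite !hcompDr // !hcompZr // scalerDr addrACA.
split; first exact: dual_bdeg_vcomp.
split; first exact: dual_bdeg_hcomp.
split; first by move=> n; split; [exact: bdeg_punit | exact: bdeg0].
split.
  move=> m n k l f g h; apply: injective_projections => /=; first exact: vcompA.
  by rewrite vcompDl // vcompDr // twist_vcomp // !vcompA // addrA.
split.
  move=> m1 n1 m2 n2 m3 n3 f g h; rewrite castP_dual.
  apply: injective_projections => /=; first exact: hcompA.
  by rewrite hcompDl // hcompDr // twist_hcomp // !castPD !hcompA // addrA.
split.
  move=> m n f; apply: injective_projections => /=; first exact: vcomp1l.
  by rewrite vcomp0l // twist_punit // vcomp1l // add0r.
split.
  move=> m n f; apply: injective_projections => /=; first exact: vcomp1r.
  by rewrite vcomp0r // vcomp1r // addr0.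
split.
  move=> m n; apply: injective_projections => /=; first exact: hcomp_punit.
  by rewrite hcomp0l // hcomp0r // addr0.
split.
  move=> m n f; rewrite castP_dual; apply: injective_projections => /=; first exact: hcomp1l.
  by rewrite hcomp0l // twist_punit // add0r hcomp1l.
split.
  move=> m n f; rewrite castP_dual; apply: injective_projections => /=; first exact: hcomp1r.
  by rewrite hcomp0r // addr0 hcomp1r.
split; first exact: dual_vcomp_hcomp.
split.
  move=> m n k s f g; apply: injective_projections => /=; first exact: blact_vcomp.
  by rewrite blactD // !blact_vcomp // twist_blact.
split.
  move=> m n k s f g; apply: injective_projections => /=; first exact: bract_vcomp.
  by rewrite bractD // !bract_vcomp.
split.
  move=> m n k s f g; apply: injective_projections => /=; first exact: vcomp_bract.
  by rewrite twist_bract // !vcomp_bract.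
split.
  move=> m1 n1 m2 n2 s1 s2 f g; apply: injective_projections => /=; first exact: hcomp_blact.
  by rewrite twist_blact // blactD // !hcomp_blact.
split.
  move=> m1 n1 m2 n2 s1 s2 f g; apply: injective_projections => /=; first exact: hcomp_bract.
  by rewrite twist_bract // bractD // !hcomp_bract.
exact: dual_hcompC.
Qed.
End DualNumbers.

Section DerivationAsMorphism.
Variables (K : fieldType) (A U : gprop K).
Hypotheses (hA : is_gprop A) (hU : is_gprop U).
Variables (d : int).

Lemma deriv0 (i : forall m n, bcar A m n -> bcar U m n) :
  is_deriv i d (fun m n (x : bcar A m n) => (0 : bcar U m n)).
Proof.
split; first split; first by move=> m n a x y; rewrite scaler0 addr0.
  split; first by move=> m n k x _; exact: (bdeg0 (gprop_bimod hU)).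
  by split=> m n s x; rewrite ?blact0 ?bract0.
by split=> *; rewrite ?(vcomp0l, vcomp0r, hcomp0l, hcomp0r) // scaler0 addr0.
Qed.

Lemma deriv_dual_morph (i D : forall m n, bcar A m n -> bcar U m n) :
  is_prop_morph A U i -> is_deriv i d D ->
  is_prop_morph A (dual_prop U d) (fun m n x => ((i m n x, D m n x) : bcar (dual_prop U d) m n)).
Proof.
move=> [[iL [iD [iLa iRa]]] [iV [iH iU]]] [[DL [DD [DLa DRa]]] [DV DH]].
split; first split.
  by move=> m n a x y; apply: injective_projections => /=; [apply: iL | apply: DL].
split; first by move=> m n k x hx; split => /=; [apply: iD | rewrite addr0; apply: DD].
split; by move=> m n s x; apply: injective_projections => /=; rewrite ?iLa ?DLa ?iRa ?DRa.
split.
  move=> m n k f g; apply: injective_projections => /=; first exact: iV.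
  move: f; apply: (linear_homogeneous_ext (gprop_bimod hA) (F := fun f => D m k (vcomp A f g))
      (G := fun f => vcomp U (D m n f) (i n k g) + vcomp U (twist d (i m n f)) (D n k g))).
  - by move=> a x y /=; rewrite (vcomp_linl hA) DL.
  - move=> a x y /=; rewrite DL iL twistD // twistZ //.
    by rewrite !vcompDl // !vcompZl // scalerDr addrACA.
  move=> a f hf /=; rewrite (DV _ _ _ _ _ _ hf) (twist_hom d (gprop_bimod hU) (iD _ _ _ _ hf)) addr0.
  by rewrite vcompZl.
split.
  move=> m1 n1 m2 n2 f g; apply: injective_projections => /=; first exact: iH.
  move: f; apply: (linear_homogeneous_ext (gprop_bimod hA) (F := fun f => D _ _ (hcomp A f g))
      (G := fun f => hcomp U (D m1 n1 f) (i m2 n2 g) + hcomp U (twist d (i m1 n1 f)) (D m2 n2 g))).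
  - by move=> a x y /=; rewrite (hcomp_linl hA) DL.
  - move=> a x y /=; rewrite DL iL twistD // twistZ //.
    by rewrite !hcompDl // !hcompZl // scalerDr addrACA.
  move=> a f hf /=; rewrite (DH _ _ _ _ _ _ _ hf) (twist_hom d (gprop_bimod hU) (iD _ _ _ _ hf)) addr0.
  by rewrite hcompZl.
move=> n; apply: injective_projections => /=; first exact: iU.
(* the Leibniz rule for 1 * 1 = 1 forces D 1 = 0 *)
have := DV _ _ _ _ (punit A n) (punit A n) (bdeg_punit hA n).
rewrite vcomp1l // iU vcomp1l // vcomp1r // ksgn0r scale1r => e.
by apply: (@addrI _ (D n n (punit A n))); rewrite addr0 -e.
Qed.
End DerivationAsMorphism.

Section DerivationCalculus.
Variables (K : fieldType) (A U : gprop K).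
Hypothesis hU : is_gprop U.
Variables (i : forall m n, bcar A m n -> bcar U m n) (d : int).

Lemma deriv_linear (D : forall m n, bcar A m n -> bcar U m n) :
  is_deriv i d D -> forall m n, linear (D m n).
Proof. by case=> [[L _] _] m n a x y; apply: L. Qed.

Lemma eq_deriv (D1 D2 : forall m n, bcar A m n -> bcar U m n) :
  (forall m n x, D1 m n x = D2 m n x) -> is_deriv i d D1 -> is_deriv i d D2.
Proof.
move=> E [[L [Dg [La Ra]]] [V H]]; split; first split.
- by move=> m n a x y; rewrite -!E L.
- split; first by move=> m n k x hx; rewrite -E; apply: Dg.
  by split=> m n s x; rewrite -!E ?La ?Ra.
split; first by move=> m n k a f g hf; rewrite -!E (V _ _ _ _ _ _ hf).
by move=> m1 n1 m2 n2 a f g hf; rewrite -!E (H _ _ _ _ _ _ _ hf).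
Qed.

Lemma deriv_comb c (D1 D2 : forall m n, bcar A m n -> bcar U m n) :
  is_deriv i d D1 -> is_deriv i d D2 -> is_deriv i d (fun m n x => c *: D1 m n x + D2 m n x).
Proof.
move=> [[L1 [Dg1 [La1 Ra1]]] [V1 H1]] [[L2 [Dg2 [La2 Ra2]]] [V2 H2]].
have swap m n (a b : K) (x1 x2 y1 y2 : bcar U m n) :
    c *: (a *: x1 + b *: y1) + (a *: x2 + b *: y2) = a *: (c *: x1 + x2) + b *: (c *: y1 + y2).
  by rewrite !scalerDr !scalerA mulrC [b * c]mulrC addrACA.
split; first split.
- by move=> m n a x y; rewrite L1 L2 -[D1 m n y]scale1r -[D2 m n y]scale1r swap !scale1r.
- split; first by move=> m n k x hx; apply: (bdeg_lin (gprop_bimod hU)); auto.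
  by split=> m n s x; rewrite ?La1 ?La2 ?Ra1 ?Ra2 ?(blactD, blactZ, bractD, bractZ).
split=> [m n k a f g hf | m1 n1 m2 n2 a f g hf].
- rewrite (V1 _ _ _ _ _ _ hf) (V2 _ _ _ _ _ _ hf) vcompDl // vcompZl // vcompDr // vcompZr //.
  by rewrite -[vcomp U (D1 m n f) _]scale1r -[vcomp U (D2 m n f) _]scale1r swap !scale1r.
- rewrite (H1 _ _ _ _ _ _ _ hf) (H2 _ _ _ _ _ _ _ hf) hcompDl // hcompZl // hcompDr // hcompZr //.
  by rewrite -[hcomp U (D1 m1 n1 f) _]scale1r -[hcomp U (D2 m1 n1 f) _]scale1r swap !scale1r.
Qed.

Lemma deriv_scale c (D : forall m n, bcar A m n -> bcar U m n) :
  is_deriv i d D -> is_deriv i d (fun m n x => c *: D m n x).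
Proof.
move=> hD; apply: eq_deriv (deriv_comb c hD (deriv0 hU d i)) => m n x.
by rewrite addr0.
Qed.

Lemma deriv_sub (D1 D2 : forall m n, bcar A m n -> bcar U m n) :
  is_deriv i d D1 -> is_deriv i d D2 -> is_deriv i d (fun m n x => D1 m n x - D2 m n x).
Proof.
move=> h1 h2; apply: eq_deriv (deriv_comb (-1) h2 h1) => m n x.
by rewrite scaleN1r addrC.
Qed.
End DerivationCalculus.
Arguments deriv_linear {K A U i d D} hD {m n}.

Lemma deriv_precomp (K : fieldType) (M C : gprop K) (iM : forall m n, bcar M m n -> bcar C m n) d
    (X : forall m n, bcar C m n -> bcar C m n) :
  is_prop_morph M C iM -> is_deriv (fun m n (z : bcar C m n) => z) d X ->
  is_deriv iM d (fun m n x => X m n (iM m n x)).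
Proof.
move=> [[iL [iD [iLa iRa]]] [iV [iH _]]] [[L [Dg [La Ra]]] [V H]].
split; first split; first by move=> m n a x y; rewrite iL L.
  split; first by move=> m n k x hx; apply: Dg; rewrite -[k]addr0; apply: iD.
  by split=> m n s x; rewrite ?iLa ?La ?iRa ?Ra.
split=> [m n k a f g hf | m1 n1 m2 n2 a f g hf].
  by rewrite iV; apply: V; rewrite -[a]addr0; apply: iD.
by rewrite iH; apply: H; rewrite -[a]addr0; apply: iD.
Qed.

Section GradedCommutator.
Variables (K : fieldType) (C : gprop K).
Hypothesis hC : is_gprop C.
Local Notation idC := (fun m n (z : bcar C m n) => z).

(* Expanding [Y X - e X Y] on a composite with the Leibniz rules gives eight
   terms; the two mixed pairs cancel. *)
Let leibniz_cancel (V : lmodType K) (A1 A2 A3 A4 B1 B4 : V) (p q r s t z : K) :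
  p = s * r -> q = s * t -> z = q * r ->
  A1 + p *: A2 + q *: (A3 + r *: A4) - s *: (B1 + t *: A3 + r *: (A2 + q *: B4)) =
  A1 - s *: B1 + z *: (A4 - s *: B4).
Proof.
move=> -> -> ->; rewrite !scalerDr ?scalerBr !scalerA !opprD !addrA.
set a2 := (s * r) *: A2; set a3 := (s * t) *: A3; set a4 := (s * t * r) *: A4; set b1 := s *: B1.
rewrite (addrAC _ (- b1) (- a3)) (addrAC _ a4 (- a3)) addrK.
rewrite (addrAC _ (- b1) (- a2)) (addrAC _ a4 (- a2)) addrK (addrAC A1 a4 (- b1)).
by congr (_ + _); rewrite scalerN scalerA; congr (- (_ *: _)); ring.
Qed.

Lemma deriv_commutator dx dy (X Y : forall m n, bcar C m n -> bcar C m n) :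
  is_deriv idC dx X -> is_deriv idC dy Y ->
  is_deriv idC (dx + dy) (fun m n z => Y m n (X m n z) - ksgn dx dy *: X m n (Y m n z)).
Proof.
move=> [[XL [XD [XLa XRa]]] [XV XH]] [[YL [YD [YLa YRa]]] [YV YH]].
have hB := gprop_bimod hC.
split; first split.
- move=> m n a x y; rewrite XL YL YL XL.
  by rewrite scalerDr [in RHS]scalerBr !scalerA (mulrC (ksgn _ _)) opprD addrACA.
- split.
    move=> m n k x hx; apply: bdegB => //; first by rewrite addrA; apply: YD; apply: XD.
    by apply: bdegZ => //; rewrite (addrC dx) addrA; apply: XD; apply: YD.
  by split=> m n s x; rewrite ?(XLa, YLa, XRa, YRa, blactB, blactZ, bractB, bractZ).
split=> [m n k a f g hf | m1 n1 m2 n2 a f g hf] /=.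
- rewrite (XV _ _ _ _ _ _ hf) (YV _ _ _ _ _ _ hf).
  rewrite !(linD (YL _ _)) !(linZ (YL _ _)) !(linD (XL _ _)) !(linZ (XL _ _)).
  rewrite (YV _ _ _ _ _ _ (XD _ _ _ _ hf)) (YV _ _ _ _ _ _ hf).
  rewrite (XV _ _ _ _ _ _ (YD _ _ _ _ hf)) (XV _ _ _ _ _ _ hf).
  rewrite vcompBl // vcompZl // vcompBr // vcompZr //.
  apply: leibniz_cancel.
  - by rewrite ksgnDr mulrC (ksgnC dy dx).
  - by rewrite ksgnDr mulrCA ksgnK mulr1.
  - by rewrite ksgnDl.
- rewrite (XH _ _ _ _ _ _ _ hf) (YH _ _ _ _ _ _ _ hf).
  rewrite !(linD (YL _ _)) !(linZ (YL _ _)) !(linD (XL _ _)) !(linZ (XL _ _)).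
  rewrite (YH _ _ _ _ _ _ _ (XD _ _ _ _ hf)) (YH _ _ _ _ _ _ _ hf).
  rewrite (XH _ _ _ _ _ _ _ (YD _ _ _ _ hf)) (XH _ _ _ _ _ _ _ hf).
  rewrite hcompBl // hcompZl // hcompBr // hcompZr //.
  apply: leibniz_cancel.
  - by rewrite ksgnDr mulrC (ksgnC dy dx).
  - by rewrite ksgnDr mulrCA ksgnK mulr1.
  - by rewrite ksgnDl.
Qed.
End GradedCommutator.

Lemma id_prop_morph (K : fieldType) (C : gprop K) : is_prop_morph C C (fun m n (z : bcar C m n) => z).
Proof. by do 3 split=> //; move=> m n k x; rewrite addr0. Qed.

Lemma deriv_free_eq0 (K : fieldType) (E : gbimod K) (M : gprop K)
    (iota : forall m n, bcar E m n -> bcar M m n) (C : gprop K)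
    (iM : forall m n, bcar M m n -> bcar C m n) d (D : forall m n, bcar M m n -> bcar C m n) :
  is_free_prop E M iota -> is_gprop C -> is_prop_morph M C iM -> is_deriv iM d D ->
  (forall m n e, D m n (iota m n e) = 0) -> forall m n x, D m n x = 0.
Proof.
move=> [_ [hM [_ free]]] hC hiM hD D0 m n x.
have hQ := dual_propP d hC.
have zero_gen : is_bimod_map 0 (fun m n (e : bcar E m n) => (0 : bcar (dual_prop C d) m n)).
  split; first by move=> *; rewrite scaler0 addr0.
  split; first by move=> *; exact: (bdeg0 (gprop_bimod hQ)).
  by split=> *; apply: injective_projections; rewrite /= ?blact0 ?bract0.
have [_ uniq] := free _ hQ _ zero_gen.
apply: (congr1 snd (uniq _ _ (deriv_dual_morph hM hC hiM hD)
  (deriv_dual_morph hM hC hiM (deriv0 hC d iM)) _ m n x)) => m' n' e.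
by rewrite /= D0.
Qed.

Lemma deriv_coprod_eq0 (K : fieldType) (M P C : gprop K)
    (iM : forall m n, bcar M m n -> bcar C m n) (iP : forall m n, bcar P m n -> bcar C m n)
    d (D : forall m n, bcar C m n -> bcar C m n) :
  is_coproduct M P C iM iP -> is_deriv (fun m n (z : bcar C m n) => z) d D ->
  (forall m n x, D m n (iM m n x) = 0) -> (forall m n y, D m n (iP m n y) = 0) ->
  forall m n z, D m n z = 0.
Proof.
move=> [hM [hP [hC [hiM [hiP coprod]]]]] hD DM DP m n z.
have [_ uniq] := coprod _ (dual_propP d hC) _ _ (deriv_dual_morph hM hC hiM (deriv0 hC d iM))
  (deriv_dual_morph hP hC hiP (deriv0 hC d iP)).
apply: (congr1 snd (uniq _ _ (deriv_dual_morph hC hC (id_prop_morph C) hD)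
  (deriv_dual_morph hC hC (id_prop_morph C) (deriv0 hC d (fun m n (z : bcar C m n) => z)))
  _ _ m n z)) => m' n' w.
- by rewrite /= DM.
- by rewrite /= DP.
Qed.

Section PreLie.
Variables (K : fieldType) (E : gbimod K) (M P C : gprop K).
Variables (iota : forall m n, bcar E m n -> bcar M m n)
  (iM : forall m n, bcar M m n -> bcar C m n) (iP : forall m n, bcar P m n -> bcar C m n).
Arguments iota : clear implicits.
Arguments iM : clear implicits.
Arguments iP : clear implicits.
Hypotheses (hfr : is_free_prop E M iota) (hco : is_coproduct M P C iM iP).
Local Notation idC := (fun m n (z : bcar C m n) => z).

Let hC : is_gprop C. Proof. by case: hco => _ [_ []]. Qed.
Let hiM : is_prop_morph M C iM. Proof. by case: hco => _ [_ [_ []]]. Qed.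

Lemma deriv_free_ext d (D1 D2 : forall m n, bcar M m n -> bcar C m n) :
  is_deriv iM d D1 -> is_deriv iM d D2 ->
  (forall m n e, D1 m n (iota m n e) = D2 m n (iota m n e)) -> forall m n x, D1 m n x = D2 m n x.
Proof.
move=> h1 h2 D12 m n x; apply/eqP; rewrite -subr_eq0; apply/eqP.
by apply: (deriv_free_eq0 hfr hC hiM (deriv_sub hC h1 h2)) => m' n' e; rewrite D12 subrr.
Qed.

Lemma deriv_coprod_free_ext d (D1 D2 : forall m n, bcar C m n -> bcar C m n) :
  is_deriv idC d D1 -> is_deriv idC d D2 ->
  (forall m n y, D1 m n (iP m n y) = D2 m n (iP m n y)) ->
  (forall m n e, D1 m n (iM m n (iota m n e)) = D2 m n (iM m n (iota m n e))) ->
  forall m n z, D1 m n z = D2 m n z.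
Proof.
move=> h1 h2 D12P D12E m n z; apply/eqP; rewrite -subr_eq0; apply/eqP.
apply: (deriv_coprod_eq0 hco (deriv_sub hC h1 h2)) => [m' n' x | m' n' y]; last by rewrite D12P subrr.
have /= := deriv_free_ext (deriv_precomp hiM h1) (deriv_precomp hiM h2) D12E x.
by move->; rewrite subrr.
Qed.

Lemma tilde_uniq d phi (phit1 phit2 : forall m n, bcar C m n -> bcar C m n) :
  is_tilde iM iP d phi phit1 -> is_tilde iM iP d phi phit2 -> forall m n z, phit1 m n z = phit2 m n z.
Proof.
move=> [h1 [M1 P1]] [h2 [M2 P2]]; apply: deriv_coprod_free_ext h1 h2 _ _ => m n y.
  by rewrite P1 P2.
by rewrite M1 M2.
Qed.

Lemma diamondE a b (theta phi X : forall m n, bcar M m n -> bcar C m n) phit :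
  is_diamond iota iM iP a b theta phi X -> is_tilde iM iP b phi phit ->
  forall m n e, X m n (iota m n e) = ksgn a b *: phit m n (theta m n (iota m n e)).
Proof. by move=> [_ [phit' [tl' Xe]]] tl m n e; rewrite Xe (tilde_uniq tl' tl). Qed.

Lemma tilde_commutator b c (phi psi ph_ps ps_ph : forall m n, bcar M m n -> bcar C m n)
    (phit psit T1 T2 : forall m n, bcar C m n -> bcar C m n) :
  is_tilde iM iP b phi phit -> is_tilde iM iP c psi psit ->
  is_diamond iota iM iP b c phi psi ph_ps -> is_diamond iota iM iP c b psi phi ps_ph ->
  is_tilde iM iP (b + c) ph_ps T1 -> is_tilde iM iP (c + b) ps_ph T2 ->
  forall m n z, psit m n (phit m n z) - ksgn b c *: phit m n (psit m n z) =
                ksgn b c *: T1 m n z - T2 m n z.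
Proof.
move=> tl_phi tl_psi d_ph_ps d_ps_ph tl1 tl2.
have [[hphit [Mphit Pphit]] [hpsit [Mpsit Ppsit]]] := (tl_phi, tl_psi).
have [[hT1 [MT1 PT1]] [hT2 [MT2 PT2]]] := (tl1, tl2).
apply: deriv_coprod_free_ext (deriv_commutator hC hphit hpsit) _ _ _ => [|m n y|m n e] /=.
- by rewrite addrC in hT2; exact (deriv_sub hC (deriv_scale hC (ksgn b c) hT1) hT2).
- by rewrite Pphit Ppsit PT1 PT2 (lin0 (deriv_linear hpsit)) (lin0 (deriv_linear hphit)) scaler0 !subrr.
rewrite Mphit Mpsit MT1 MT2 (diamondE d_ph_ps tl_psi) (diamondE d_ps_ph tl_phi).
by rewrite scalerA (ksgnC c b) ksgnK scale1r.
Qed.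
End PreLie.

(* With x, y, z the Koszul signs of (a, c), (a, b), (b, c). *)
Lemma associator_sign_identity (K : fieldType) (V : lmodType K) (x y z : K) (u v w : V) :
  z * z = 1 ->
  (x * z) *: (y *: ((z *: u - w) + z *: v)) - (y * x) *: u =
  z *: ((y * z) *: (x *: v) - (x * y) *: w).
Proof.
move=> zz; rewrite !scalerDr ?scalerBr !scalerN !scalerA.
have -> : x * z * y * z = y * x by rewrite -[RHS]mulr1 -zz; ring.
rewrite -!addrA addrCA (addrCA (_ *: u)) subrr addr0 addrC.
congr (_ *: _ - _ *: _); last by ring.
by rewrite -[LHS]mulr1 -zz; ring.
Qed.

Theorem mainTheorem7 (K : fieldType) (charK0 : [pchar K] =i pred0)
  (E : gbimod K) (M : gprop K) (iota : forall m n, bcar E m n -> bcar M m n)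
  (P : gprop K) (C : gprop K)
  (iM : forall m n, bcar M m n -> bcar C m n)
  (iP : forall m n, bcar P m n -> bcar C m n) :
  is_free_prop E M iota ->
  is_gprop P ->
  is_coproduct M P C iM iP ->
  forall (a b c : int) (theta phi psi : forall m n, bcar M m n -> bcar C m n),
  is_deriv iM a theta -> is_deriv iM b phi -> is_deriv iM c psi ->
  forall (th_ph th_ph__ps ph_ps th__ph_ps th_ps th_ps__ph ps_ph th__ps_ph :
            forall m n, bcar M m n -> bcar C m n),
  is_diamond iota iM iP a b theta phi th_ph ->
  is_diamond iota iM iP (a + b) c th_ph psi th_ph__ps ->
  is_diamond iota iM iP b c phi psi ph_ps ->
  is_diamond iota iM iP a (b + c) theta ph_ps th__ph_ps ->
  is_diamond iota iM iP a c theta psi th_ps ->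
  is_diamond iota iM iP (a + c) b th_ps phi th_ps__ph ->
  is_diamond iota iM iP c b psi phi ps_ph ->
  is_diamond iota iM iP a (c + b) theta ps_ph th__ps_ph ->
  forall m n (x : bcar M m n),
    th_ph__ps m n x - th__ph_ps m n x =
    ksgn b c *: (th_ps__ph m n x - th__ps_ph m n x).
Proof.
move=> hfr _ hco a b c theta phi psi _ _ _ th_ph th_ph__ps ph_ps th__ph_ps th_ps th_ps__ph
  ps_ph th__ps_ph d_th_ph d_th_ph__ps d_ph_ps d_th__ph_ps d_th_ps d_th_ps__ph d_ps_ph d_th__ps_ph.
have hC : is_gprop C by case: hco => _ [_ []].
have [_ [phit [tl_phi _]]] := d_th_ph.
have [der1 [psit [tl_psi _]]] := d_th_ph__ps.
have [der2 [T1 [tl_ph_ps _]]] := d_th__ph_ps.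
have [der3 _] := d_th_ps__ph.
have [der4 [T2 [tl_ps_ph _]]] := d_th__ps_ph.
rewrite addrA in der2; rewrite addrAC in der3; rewrite addrA addrAC in der4.
have comm m n z : psit m n (phit m n z) =
    (ksgn b c *: T1 m n z - T2 m n z) + ksgn b c *: phit m n (psit m n z).
  by rewrite -(tilde_commutator hfr hco tl_phi tl_psi d_ph_ps d_ps_ph tl_ph_ps tl_ps_ph) subrK.
have lhs := deriv_sub hC der1 der2.
have rhs := deriv_scale hC (ksgn b c) (deriv_sub hC der3 der4).
move=> m n x; apply: (deriv_free_ext hfr hco lhs rhs) => m' n' e /=.
rewrite (diamondE hfr hco d_th_ph__ps tl_psi) (diamondE hfr hco d_th_ph tl_phi).
rewrite (diamondE hfr hco d_th_ps__ph tl_phi) (diamondE hfr hco d_th_ps tl_psi).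
rewrite (diamondE hfr hco d_th__ph_ps tl_ph_ps) (diamondE hfr hco d_th__ps_ph tl_ps_ph).
rewrite !(linZ (deriv_linear tl_psi.1)) !(linZ (deriv_linear tl_phi.1)) comm.
rewrite !ksgnDl !ksgnDr (ksgnC c b); exact: associator_sign_identity (ksgnK b c).
Qed.
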